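(* Let $n\ge2$, let $\lambda_1\ge\dots\ge\lambda_n$ be real numbers, and let $\mu_1\ge\dots\ge\mu_{n-1}$ be the critical points (roots of the derivative, with multiplicity) of $q(x)=\prod_{j=1}^n(x-\lambda_j)$. Then for all integers $1\le\ell\le r\le n-1$, $$\sum_{j=\ell}^r\lambda_{j+1}+\frac{1}{r+1}\sum_{j=\ell}^r(\lambda_\ell-\lambda_{j+1})\le\sum_{j=\ell}^r\mu_j\le\sum_{j=\ell}^r\lambda_j-\frac{1}{n-\ell+1}\sum_{j=\ell}^r(\lambda_j-\lambda_{r+1}).$$ Equivalently, $$\frac{r}{r+1}\sum_{j=\ell}^r\lambda_{j+1}+\frac{r-\ell+1}{r+1}\lambda_\ell\le\sum_{j=\ell}^r\mu_j\le\frac{n-\ell}{n-\ell+1}\sum_{j=\ell}^r\lambda_j+\frac{r-\ell+1}{n-\ell+1}\lambda_{r+1}.$$ *)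

From HB Require Import structures.
From mathcomp Require Import all_boot all_order all_algebra.
From mathcomp Require Export reals.
Set Implicit Arguments. Unset Strict Implicit. Unset Printing Implicit Defensive.
Import Order.TTheory GRing.Theory Num.Theory.
Local Open Scope ring_scope.

Definition rootpoly (R : nzRingType) (lam : nat -> R) (n : nat) : {poly R} :=
  \prod_(1 <= j < n.+1) ('X - (lam j)%:P).

(* The critical points interlace the roots, [lam j.+1 <= mu j <= lam j] (Rolle plus
   multiplicity counting for the lower half, reflection [x |-> -x] for the upper).
   For the upper bound, fix the window [l..r] and let [Q] be the polynomial with roots
   [lam l, ..., lam r] and [c = lam r.+1]. The critical points of [(X - c)^(n - r) Q]
   other than [c] are the roots of [E = (n - r) Q + (X - c) Q'], whose sum is exactly
   the right-hand side of the upper bound; so the claim says that a coefficient of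
   [D = E - (n - l + 1) K], with [K] the polynomial with roots [mu l, ..., mu r],
   is nonpositive.  After dividing out the factors shared by all three polynomials
   (repeated roots [lam u = lam u.+1 = mu u]), that coefficient is a Lagrange sum over
   the remaining critical points [mu t], and each term is nonpositive because
   [sum_i 1 / (mu t - lam i) = 0].  The lower bound is the upper bound for the
   reflected polynomial [q(-x)]. *)

From HB Require Import structures.
From mathcomp Require Import all_boot all_order all_algebra.
From mathcomp Require Import reals.
From mathcomp Require Import polyorder polyrcf.
From mathcomp Require Import zify ring lra.
Import Order.TTheory GRing.Theory Num.Theory.
Local Open Scope ring_scope.
Set Implicit Arguments. Unset Strict Implicit. Unset Printing Implicit Defensive.

Definition cnt (a b : nat) (P : pred nat) : nat := (\sum_(a <= i < b) P i)%N.

Section Counting.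
Implicit Types (a b : nat) (P Q U T : pred nat).

Lemma leq_cnt a b P Q : (forall i, (a <= i < b)%N -> P i -> Q i) ->
  (cnt a b P <= cnt a b Q)%N.
Proof.
move=> PQ; rewrite /cnt big_nat [X in (_ <= X)%N]big_nat; apply: leq_sum => i ri.
by case: (P i) (PQ i ri) => // ->.
Qed.

Lemma eq_cnt a b P Q : (forall i, (a <= i < b)%N -> P i = Q i) -> cnt a b P = cnt a b Q.
Proof. by move=> PQ; rewrite /cnt big_nat [RHS]big_nat; apply: eq_bigr => i /PQ->. Qed.

Lemma cnt_cat a b c P : (a <= b)%N -> (b <= c)%N ->
  cnt a c P = (cnt a b P + cnt b c P)%N.
Proof. by move=> ab bc; rewrite /cnt (big_cat_nat ab bc). Qed.

Lemma cnt_recl a b P : (a < b)%N -> cnt a b P = (P a + cnt a.+1 b P)%N.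
Proof. by move=> ab; rewrite /cnt big_ltn. Qed.

Lemma cnt_gt0 a b P t : (a <= t < b)%N -> P t -> (0 < cnt a b P)%N.
Proof.
move=> /andP[ai ib] Pt; rewrite (cnt_cat _ ai (ltnW ib)) (cnt_recl _ ib) Pt.
by rewrite addnCA add1n.
Qed.

Lemma cnt_leq a b P : (cnt a b P <= b - a)%N.
Proof.
rewrite /cnt /index_iota; move: (b - a)%N => k; elim: k a => [|k IH] a; first by rewrite big_nil.
by rewrite /= big_cons; move: (IH a.+1); case: (P a) => /=; lia.
Qed.

Lemma cnt_pred0 a b P : (forall i, (a <= i < b)%N -> ~~ P i) -> cnt a b P = 0%N.
Proof. by move=> nP; rewrite /cnt big_nat big1 // => i /nP/negPf->. Qed.

Lemma cnt_predT a b P : (forall i, (a <= i < b)%N -> P i) -> cnt a b P = (b - a)%N.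
Proof.
move=> allP; rewrite /cnt big_nat (eq_bigr (fun=> 1%N)) => [|i /allP-> //].
by rewrite -big_nat sum1_size size_iota.
Qed.

Lemma leq_cntD a b P Q T : (forall i, (a <= i < b)%N -> (T i <= P i + Q i)%N) ->
  (cnt a b T <= cnt a b P + cnt a b Q)%N.
Proof.
move=> h; rewrite /cnt -big_split /= big_nat [X in (_ <= X)%N]big_nat.
exact: leq_sum.
Qed.

Lemma cntD_leq a b P Q T : (forall i, (a <= i < b)%N -> (P i + Q i <= T i)%N) ->
  (cnt a b P + cnt a b Q <= cnt a b T)%N.
Proof.
move=> h; rewrite /cnt -big_split /= big_nat [X in (_ <= X)%N]big_nat.
exact: leq_sum.
Qed.

Lemma cntD3_leq a b P Q U T :
  (forall i, (a <= i < b)%N -> (P i + Q i + U i <= T i)%N) ->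
  (cnt a b P + cnt a b Q + cnt a b U <= cnt a b T)%N.
Proof.
move=> h; rewrite /cnt -!big_split /= big_nat [X in (_ <= X)%N]big_nat.
exact: leq_sum.
Qed.

End Counting.

Definition prodX (R : nzRingType) (a b : nat) (f : nat -> R) : {poly R} :=
  \prod_(a <= i < b) ('X - (f i)%:P).

Section ProdX.
Variable R : fieldType.
Implicit Types (a b : nat) (f : nat -> R).

Lemma size_prod_XsubC_cond (s : seq nat) (P : pred nat) f :
  size (\prod_(u <- s | P u) ('X - (f u)%:P)) = (count P s).+1.
Proof. by rewrite -big_filter size_prod_XsubC size_filter. Qed.

Lemma horner_prod_XsubC (s : seq nat) (P : pred nat) f x :
  (\prod_(u <- s | P u) ('X - (f u)%:P)).[x] = \prod_(u <- s | P u) (x - f u).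
Proof. by rewrite horner_prod; apply: eq_bigr => i _; rewrite hornerXsubC. Qed.

Lemma monic_prodX a b f : prodX a b f \is monic.
Proof. exact: monic_prod_XsubC. Qed.

Lemma size_prodX a b f : size (prodX a b f) = (b - a).+1.
Proof. by rewrite size_prod_XsubC size_iota. Qed.

Lemma horner_prodX a b f x : (prodX a b f).[x] = \prod_(a <= i < b) (x - f i).
Proof. exact: horner_prod_XsubC. Qed.

Lemma root_prodX a b f x : root (prodX a b f) x = (x \in map f (index_iota a b)).
Proof. by rewrite /prodX -(big_map f predT (fun y => 'X - y%:P)) root_prod_XsubC. Qed.

Lemma root_prodX_at a b f t : (a <= t < b)%N -> root (prodX a b f) (f t).
Proof. by move=> rt; rewrite root_prodX map_f // mem_index_iota. Qed.

Lemma mu_prodX a b f x : \mu_x (prodX a b f) = cnt a b (fun i => f i == x).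
Proof.
rewrite /prodX /cnt /index_iota; move: (b - a)%N => k; elim: k a => [|k IH] a.
  by rewrite !big_nil mu_polyC.
rewrite /= !big_cons mu_mul; last by rewrite mulf_neq0 ?polyXsubC_eq0 ?monic_neq0 ?monic_prod_XsubC.
rewrite IH; congr (_ + _)%N; have [<-|ne] := eqVneq (f a) x; first by rewrite mu_XsubC.
by rewrite muNroot // root_XsubC eq_sym.
Qed.

Lemma coef_prodX_size a b f : (prodX a b f)`_(b - a) = 1.
Proof. by have /monicP := monic_prodX a b f; rewrite /lead_coef size_prodX. Qed.

Lemma coef_prodX_pred a b f : (a < b)%N ->
  (prodX a b f)`_(b - a).-1 = - \sum_(a <= i < b) f i.
Proof.
move=> ab; rewrite /prodX -(big_map f predT (fun y => 'X - y%:P)).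
have -> : (b - a)%N = size (map f (index_iota a b)) by rewrite size_map size_iota.
by rewrite coefPn_prod_XsubC ?big_map // size_map size_iota subn_eq0 -ltnNge.
Qed.

Lemma horner_deriv_prodX a b f x : (prodX a b f).[x] != 0 ->
  (prodX a b f)^`().[x] = (prodX a b f).[x] * \sum_(a <= i < b) (x - f i)^-1.
Proof.
rewrite /prodX /index_iota; move: (b - a)%N => k; elim: k a => [|k IH] a.
  by rewrite !big_nil derivC !hornerE.
rewrite [iota _ _]/= !big_cons derivM hornerD !hornerM derivXsubC hornerC mul1r.
rewrite hornerXsubC mulf_eq0 negb_or => /andP[xa xP]; rewrite IH //.
set P := (\prod_(j <- _) _).[x]; set S := \sum_(j <- _) _.
by rewrite mulrDr [_ * P * _]mulrAC mulfV // mul1r; ring.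
Qed.

Lemma comp_prodX_opp a b f :
  prodX a b f \Po (- 'X) = (-1) ^+ (b - a) *: prodX a b (fun i => - f i).
Proof.
rewrite /prodX /index_iota; move: (b - a)%N => k; elim: k a => [|k IH] a.
  by rewrite !big_nil comp_polyC scale1r.
rewrite [iota _ _]/= !big_cons comp_polyM IH comp_polyB comp_polyX comp_polyC.
by rewrite -!mul_polyC exprS polyCM !polyCN polyC1; ring.
Qed.

Lemma prodX_reflect m f : prodX 1 m.+1 (fun i => - f (m.+1 - i)%N) =
  (-1) ^+ m *: (prodX 1 m.+1 f \Po (- 'X)).
Proof.
rewrite comp_prodX_opp subSS subn0 scalerA -exprD addnn -mul2n exprM sqrrN.
rewrite !expr1n scale1r /prodX big_nat_rev; apply: eq_big_nat => i ri.
by rewrite subSS subKn //; lia.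
Qed.

End ProdX.

Section PolyField.
Variable R : fieldType.

Lemma coef_lagrange (s : seq nat) (a : nat -> R) (P : {poly R}) :
  uniq s -> {in s &, injective a} -> (size P <= size s)%N ->
  P`_(size s).-1 = \sum_(t <- s) P.[a t] / \prod_(u <- s | u != t) (a t - a u).
Proof.
move=> us ia sP; set w := fun t => \prod_(u <- s | u != t) (a t - a u).
pose L := \sum_(t <- s) (P.[a t] / w t) *: \prod_(u <- s | u != t) ('X - (a u)%:P).
have count_neq t : t \in s -> count (predC1 t) s = (size s).-1.
  move=> ts; have := count_predC (pred1 t) s.
  by rewrite (count_uniq_mem _ us) ts add1n => <-.
have w_neq0 t : t \in s -> w t != 0.
  move=> ts; rewrite prodf_seq_neq0; apply/allP => u us' /=; apply/implyP => ut.
  by rewrite subr_eq0; apply: contra ut => /eqP/(ia _ _ ts us')->.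
have sL : (size L <= size s)%N.
  apply: (leq_trans (size_sum _ _ _)); apply/bigmax_leqP_seq => t ts _.
  apply: (leq_trans (size_scale_leq _ _)).
  by rewrite size_prod_XsubC_cond count_neq // prednK //; case: s ts {us ia sP L count_neq w w_neq0}.
have L_at v : v \in s -> L.[a v] = P.[a v].
  move=> vs; rewrite horner_sum (bigD1_seq v) //= hornerZ horner_prod_XsubC.
  rewrite mulfVK ?w_neq0 // big1_seq ?addr0 // => t /andP[tv ts].
  rewrite hornerZ horner_prod_XsubC -big_filter (bigD1_seq v) //=.
  - by rewrite subrr mul0r mulr0.
  - by rewrite mem_filter vs eq_sym tv.
  - exact: filter_uniq.
have PL : P = L.
  apply/eqP; rewrite -subr_eq0; apply/negPn/negP => PL_neq0.
  have roots : all (root (P - L)) (map a s).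
    by apply/allP => x /mapP [v vs ->]; rewrite rootE !hornerE L_at // subrr.
  have uniq_as : uniq (map a s) by rewrite map_inj_in_uniq.
  have := max_poly_roots PL_neq0 roots uniq_as; rewrite size_map ltnNge => /negP[].
  by apply: leq_trans (size_polyD _ _) _; rewrite size_polyN geq_max sP sL.
rewrite {1}PL coef_sum; apply: eq_big_seq => t ts; rewrite coefZ.
have /monicP := monic_prod_XsubC s (predC1 t) a.
by rewrite /lead_coef size_prod_XsubC_cond count_neq // => ->; rewrite mulr1.
Qed.

Lemma coef_Mmonic (p Z : {poly R}) k : Z \is monic -> (size p <= k.+1)%N ->
  (p * Z)`_(k + (size Z).-1) = p`_k.
Proof.
move=> mZ sp; have sZ : (0 < size Z)%N by rewrite size_poly_gt0 monic_neq0.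
have [pk0|pk_neq0] := eqVneq p`_k 0.
  have {}sp : (size p <= k)%N.
    apply/leq_sizeP => j kj; have [->//|ne] := eqVneq j k.
    by move/leq_sizeP: sp; apply; lia.
  rewrite pk0 nth_default //; apply: leq_trans (size_polyMleq _ _) _; lia.
have {}sp : size p = k.+1.
  apply/eqP; rewrite eqn_leq sp /=; apply: contra_neqT pk_neq0; rewrite -ltnNge.
  by move=> spk; rewrite nth_default.
have p_neq0 : p != 0 by rewrite -size_poly_eq0 sp.
have := lead_coef_Mmonic p mZ; rewrite /lead_coef size_Mmonic // sp.
by have -> : (k.+1 + size Z).-2 = (k + (size Z).-1)%N by lia.
Qed.

Lemma dvdp_prod_XsubC_mu a b (P : pred nat) (f : nat -> R) (p : {poly R}) : p != 0 ->
  (forall c, (cnt a b (fun u => P u && (f u == c)) <= \mu_c p)%N) ->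
  \prod_(a <= u < b | P u) ('X - (f u)%:P) %| p.
Proof.
rewrite /cnt /index_iota; move: (b - a)%N => k; elim: k a p => [|k IH] a p p_neq0 mu_p.
  by rewrite big_nil dvd1p.
have {}mu_p c : ((P a && (f a == c)) + \sum_(u <- iota a.+1 k) (P u && (f u == c))
    <= \mu_c p)%N by have := mu_p c; rewrite /= big_cons.
rewrite /= big_cons; have [Pa|nPa] := boolP (P a); last first.
  by apply: IH => // c; have := mu_p c; rewrite (negPf nPa).
have : root p (f a) by rewrite -mu_gt0 //; have := mu_p (f a); rewrite Pa eqxx; lia.
rewrite root_factor_theorem => /divpK; set p1 := _ %/ _ => ep.
rewrite -ep mulrC dvdp_mul2r ?polyXsubC_eq0 //.
have p1_neq0 : p1 != 0 by apply: contraNneq p_neq0 => e; rewrite -ep e mul0r.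
apply: IH => // c; have := mu_p c; rewrite -ep mu_mul ?mulf_neq0 ?polyXsubC_eq0 // Pa /=.
have [<-|ne] := eqVneq (f a) c; first by rewrite mu_XsubC; lia.
by rewrite [\mu_c ('X - _)]muNroot ?root_XsubC 1?eq_sym //; lia.
Qed.

End PolyField.

Definition eqpair (T : eqType) (f : nat -> T) (c : T) : pred nat :=
  fun u => (f u == c) && (f u.+1 == c).

Lemma cnt_eqpair_lt (T : eqType) (f : nat -> T) c a k :
  (0 < cnt a (a + k).+1 (fun i => f i == c))%N ->
  (cnt a (a + k) (eqpair f c) < cnt a (a + k).+1 (fun i => f i == c))%N.
Proof.
elim: k a => [|k IH] a; first by rewrite addn0 /cnt [\sum_(a <= i < a) _]big_geq.
rewrite addnS -addSn (cnt_recl _ (_ : a < a.+1 + k)%N) ?(cnt_recl _ (_ : a < (a.+1 + k).+1)%N);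
  try lia.
rewrite [eqpair f c a]/eqpair; have [fa|nfa] := eqVneq (f a) c; last by move=> /IH.
set E := cnt a.+1 (a.+1 + k).+1 _; have [E0|E_gt0] := posnP E; last first.
  by move: (IH a.+1 E_gt0); case: (f a.+1 == c); lia.
have -> : f a.+1 == c = false.
  apply/negbTE/negP => fa1; have r1 : (a.+1 <= a.+1 < (a.+1 + k).+1)%N by lia.
  by move: (cnt_gt0 (P := fun i => f i == c) r1 fa1); rewrite -/E E0.
rewrite E0 cnt_pred0 // => i ri; apply/negP => /andP[fi _].
have ri' : (a.+1 <= i < (a.+1 + k).+1)%N by lia.
by move: (cnt_gt0 (P := fun i => f i == c) ri' fi); rewrite -/E E0.
Qed.

Section Nonincreasing.
Variables (R : numDomainType) (f : nat -> R) (a b : nat).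
Hypothesis f_noninc : forall i, (a <= i)%N -> (i < b)%N -> f i.+1 <= f i.

Lemma nonincr_le i j : (a <= i)%N -> (i <= j)%N -> (j <= b)%N -> f j <= f i.
Proof.
move=> ai; elim: j => [|j IH] ij jb; first by have -> : i = 0%N by lia.
have [->//|ne] := eqVneq i j.+1.
by apply: le_trans (IH _ _); [apply: f_noninc|..]; lia.
Qed.

Lemma cnt_eq_nonincr c : (a <= b)%N ->
  (cnt a b.+1 (fun i => f i == c) <= (cnt a b (eqpair f c)).+1)%N.
Proof.
move=> ab; suff key k : (k <= b - a)%N ->
    (cnt (b - k) b.+1 (fun i => f i == c) <= (cnt (b - k) b (eqpair f c)).+1)%N.
  by have := key _ (leqnn _); rewrite subKn.
elim: k => [_|k IH kb].
  by rewrite subn0; apply: leq_trans (cnt_leq _ _ _) _; rewrite subSnn.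
have {}IH := IH (ltnW kb); have e : (b - k = (b - k.+1).+1)%N by lia.
rewrite (cnt_recl _ (_ : b - k.+1 < b.+1)%N) ?(cnt_recl _ (_ : b - k.+1 < b)%N) -?e; try lia.
rewrite [eqpair f c _]/eqpair; have [fk|nfk] := eqVneq (f (b - k.+1)%N) c; last first.
  by move: IH; lia.
rewrite -e; have [fk1|nfk1] := eqVneq (f (b - k)%N) c; first by move: IH; lia.
have lt_c : f (b - k)%N < c by rewrite lt_neqAle nfk1 -fk e f_noninc //; lia.
rewrite cnt_pred0 // => i ri; rewrite lt_eqF // (le_lt_trans _ lt_c) //.
by apply: nonincr_le; lia.
Qed.

End Nonincreasing.

Definition critical_points (R : rcfType) (n : nat) (lam mu : nat -> R) : Prop :=
  [/\ (2 <= n)%N,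
      forall i, (1 <= i)%N -> (i < n)%N -> lam i.+1 <= lam i,
      forall i, (1 <= i)%N -> (i < n.-1)%N -> mu i.+1 <= mu i &
      (prodX 1 n.+1 lam)^`() = n%:R *: prodX 1 n mu].

Section Interlacing.
Variables (R : rcfType) (n : nat) (lam mu : nat -> R).
Hypothesis crit : critical_points n lam mu.

Local Notation q := (prodX 1 n.+1 lam).

Lemma lam_le i j : (1 <= i)%N -> (i <= j)%N -> (j <= n)%N -> lam j <= lam i.
Proof. by case: crit => _ lam_noninc _ _; apply: nonincr_le. Qed.

Lemma mu_le i j : (1 <= i)%N -> (i <= j)%N -> (j <= n.-1)%N -> mu j <= mu i.
Proof. by case: crit => _ _ mu_noninc _; apply: nonincr_le. Qed.

Lemma cnt_mu_root c : root q c ->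
  cnt 1 n (fun t => mu t == c) = (cnt 1 n.+1 (fun i => lam i == c)).-1.
Proof.
case: crit => n_ge2 _ _ deriv_q qc; have := mu_deriv qc.
by rewrite deriv_q mu_mulC ?pnatr_eq0 -?lt0n 1?ltnW // !mu_prodX subn1.
Qed.

Lemma root_deriv_mu z : q^`().[z] = 0 -> exists2 t, (1 <= t < n)%N & mu t = z.
Proof.
case: crit => n_ge2 _ _ ->; rewrite hornerZ => /eqP; rewrite mulf_eq0 pnatr_eq0.
case/orP => [/eqP n0|]; first by rewrite n0 in n_ge2.
by rewrite -rootE root_prodX => /mapP[t]; rewrite mem_index_iota => rt ->; exists t.
Qed.

Lemma rolle_mu s : (1 <= s)%N -> (s < n)%N -> lam s.+1 < lam s ->
  exists2 t, (1 <= t < n)%N & lam s.+1 < mu t < lam s.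
Proof.
move=> s_ge1 s_lt_n lt_s; have q_s1 : root q (lam s.+1) by apply: root_prodX_at; lia.
have q_s : root q (lam s) by apply: root_prodX_at; lia.
have [z z_in /root_deriv_mu[t rt mu_t]] :=
  poly_rolle lt_s (etrans (rootP q_s1) (esym (rootP q_s))).
by exists t; rewrite // mu_t; rewrite in_itv in z_in.
Qed.

(* Rolle supplies a new [mu] in each gap [lam s.+1 < lam s], and a repeated root
   [lam s] is a root of [q'] of one smaller multiplicity. *)
Lemma cnt_lam_ge s : (1 <= s <= n)%N ->
  (cnt 1 n.+1 (fun i => (lam s <= lam i)%R) <= (cnt 1 n (fun t => (lam s <= mu t)%R)).+1)%N.
Proof.
elim: s => [//|s IH] /andP[_ s_lt_n].
have q_s1 : root q (lam s.+1) by apply: root_prodX_at; lia.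
have cnt_s1 := cnt_mu_root q_s1.
have : (0 < cnt 1 n.+1 (fun i => lam i == lam s.+1))%N.
  by apply: (@cnt_gt0 _ _ _ s.+1) => //; lia.
have [s0|s_gt0] := posnP s.
  rewrite s0 in cnt_s1 *.
  have : (cnt 1 n.+1 (fun i => (lam 1 <= lam i)%R) <= cnt 1 n.+1 (fun i => lam i == lam 1))%N.
    by apply: leq_cnt => i ri lam1i; rewrite eq_le lam1i andbT lam_le //; lia.
  have : (cnt 1 n (fun t => mu t == lam 1) <= cnt 1 n (fun t => (lam 1 <= mu t)%R))%N.
    by apply: leq_cnt => i _ /eqP->.
  by move: cnt_s1; lia.
have {IH} := IH (_ : 1 <= s <= n)%N; rewrite s_gt0 ltnW //= => IH.
have lam_s : lam s.+1 <= lam s by apply: lam_le; lia.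
have [lam_eq|lam_neq] := eqVneq (lam s.+1) (lam s); first by rewrite lam_eq => _; exact: IH.
have lt_s : lam s.+1 < lam s by rewrite lt_neqAle lam_neq lam_s.
have [t rt /andP[lt_z lt_z']] := rolle_mu s_gt0 s_lt_n lt_s.
have lam_split : (cnt 1 n.+1 (fun i => (lam s.+1 <= lam i)%R) <=
   cnt 1 n.+1 (fun i => (lam s <= lam i)%R) + cnt 1 n.+1 (fun i => lam i == lam s.+1))%N.
  apply: leq_cntD => i ri; have [i_le|i_gt] := leqP i s.
    have -> : lam s <= lam i by apply: lam_le; lia.
    by case: (lam s.+1 <= lam i).
  have le_i : lam i <= lam s.+1 by apply: lam_le; lia.
  by rewrite eq_le le_i /=; case: (lam s.+1 <= lam i); rewrite ?addn1.
have mu_split : (cnt 1 n (fun u => (lam s <= mu u)%R) + cnt 1 n (fun u => mu u == mu t)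
    + cnt 1 n (fun u => mu u == lam s.+1) <= cnt 1 n (fun u => (lam s.+1 <= mu u)%R))%N.
  apply: cntD3_leq => u _; have [->|ne_t] := eqVneq (mu u) (mu t).
    by rewrite (ltW lt_z) (gt_eqF lt_z) (lt_geF lt_z').
  have [->|ne_s1] := eqVneq (mu u) (lam s.+1); first by rewrite lexx (lt_geF lt_s).
  by case: (boolP (lam s <= mu u)) => // /(le_trans (ltW lt_s)) ->.
have : (0 < cnt 1 n (fun u => mu u == mu t))%N by apply: (cnt_gt0 rt).
by move: IH cnt_s1 lam_split mu_split; lia.
Qed.

Lemma le_lam_mu j : (1 <= j)%N -> (j < n)%N -> lam j.+1 <= mu j.
Proof.
move=> j_ge1 j_lt_n; rewrite leNgt; apply/negP => mu_lt.
have /cnt_lam_ge : (1 <= j.+1 <= n)%N by lia.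
rewrite (@cnt_cat 1 j.+2) ?(@cnt_cat 1 j n) //; try lia.
rewrite cnt_predT => [|i ri]; last by apply: lam_le; lia.
rewrite [cnt j n _]cnt_pred0 => [|t rt]; last by rewrite -ltNge (le_lt_trans _ mu_lt) // mu_le; lia.
by have := cnt_leq 1 j (fun t => (lam j.+1 <= mu t)%R); lia.
Qed.

End Interlacing.

Definition rev_opp (R : zmodType) (N : nat) (f : nat -> R) (i : nat) : R := - f (N - i)%N.

Section Reflection.
Variables (R : rcfType) (n : nat) (lam mu : nat -> R).
Hypothesis crit : critical_points n lam mu.

Lemma critical_points_rev_opp : critical_points n (rev_opp n.+1 lam) (rev_opp n mu).
Proof.
case: crit => n_ge2 lam_noninc mu_noninc deriv_q; split=> // [i i_ge1 i_lt|i i_ge1 i_lt|].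
- rewrite lerN2 (_ : n.+1 - i = (n - i).+1)%N 1?subSS; last by lia.
  by apply: lam_noninc; lia.
- by rewrite lerN2 (_ : n - i = (n - i.+1).+1)%N; [apply: mu_noninc|]; lia.
have [m n_eq] : exists m, n = m.+1 by exists n.-1; lia.
rewrite /rev_opp prodX_reflect derivZ deriv_comp deriv_q derivN derivX comp_polyZ.
rewrite [in RHS]n_eq prodX_reflect -n_eq mulrN1 scalerN !scalerA -scaleNr.
by congr (_ *: _); rewrite n_eq exprS; ring.
Qed.

Lemma le_mu_lam j : (1 <= j)%N -> (j < n)%N -> mu j <= lam j.
Proof.
move=> j_ge1 j_lt_n; have := le_lam_mu critical_points_rev_opp (_ : 1 <= n - j)%N.
rewrite /rev_opp lerN2 (_ : n.+1 - (n - j).+1 = j)%N ?subKn; [|lia|lia].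
by apply; lia.
Qed.

End Reflection.

Section SimpleCriticalPoints.
Variables (R : rcfType) (n : nat) (lam mu : nat -> R).
Hypothesis crit : critical_points n lam mu.

Local Notation q := (prodX 1 n.+1 lam).

(* At a root of [q], [lam] takes the value once more often than [mu] does
   ([cnt_mu_root]); a value [mu t = lam i] with [lam t != lam t.+1] would make [mu]
   take it as often as [lam]. *)
Lemma root_mu_pair t : (1 <= t)%N -> (t < n)%N -> root q (mu t) -> lam t = lam t.+1.
Proof.
move=> t_ge1 t_lt_n q_mu; apply/eqP/negPn/negP => lam_neq.
have [n_ge2 lam_noninc _ _] := crit.
have lam_pairs : (cnt 1 n.+1 (fun i => lam i == mu t) <= (cnt 1 n (eqpair lam (mu t))).+1)%N.
  exact: cnt_eq_nonincr lam_noninc (mu t) (ltnW n_ge2).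
have mu_lam := cnt_mu_root crit q_mu.
have : (cnt 1 n (eqpair lam (mu t)) + cnt 1 n (pred1 t)
    <= cnt 1 n (fun u => mu u == mu t))%N.
  apply: cntD_leq => u ru /=; have [->|u_neq] := eqVneq u t.
    have -> : eqpair lam (mu t) t = false.
      by apply: contraNF lam_neq => /andP[/eqP-> /eqP->].
    by rewrite !eqxx.
  rewrite addn0; case/boolP: (eqpair lam (mu t) u) => // /andP[/eqP lam_u /eqP lam_u1].
  by rewrite eq_le -{1}lam_u -lam_u1 (le_mu_lam crit) ?(le_lam_mu crit) //; lia.
have : (0 < cnt 1 n (pred1 t))%N by apply: (@cnt_gt0 _ _ _ t) => /=; lia.
have [i ri lam_i] : exists2 i, (1 <= i < n.+1)%N & mu t = lam i.
  by move: q_mu; rewrite root_prodX => /mapP[i]; rewrite mem_index_iota; exists i.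
have : (0 < cnt 1 n.+1 (fun j => lam j == mu t))%N.
  by apply: (@cnt_gt0 _ _ _ i); rewrite ?lam_i.
lia.
Qed.

Lemma pair_mu_eq t : (1 <= t)%N -> (t < n)%N -> lam t = lam t.+1 -> mu t = lam t.
Proof.
move=> t_ge1 t_lt_n lam_eq; apply/eqP; rewrite eq_le (le_mu_lam crit) //=.
by rewrite [X in X <= _]lam_eq (le_lam_mu crit).
Qed.

Section Simple.
Variable t : nat.
Hypotheses (t_ge1 : (1 <= t)%N) (t_lt_n : (t < n)%N) (lam_neq : lam t != lam t.+1).

Lemma simple_mu_not_root : ~~ root q (mu t).
Proof. by apply: contra lam_neq => /(root_mu_pair t_ge1 t_lt_n)->. Qed.

Lemma simple_mu_between : lam t.+1 < mu t < lam t.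
Proof.
have := simple_mu_not_root; rewrite !lt_neqAle (le_lam_mu crit) ?(le_mu_lam crit) // !andbT.
move=> q_mu; apply/andP; split; apply: contraNneq q_mu.
  by move=> <-; apply: root_prodX_at; lia.
by move=> ->; apply: root_prodX_at; lia.
Qed.

Lemma simple_mu_lt u : (1 <= u)%N -> (u < t)%N -> mu t < mu u /\ mu t < lam u.
Proof.
move=> u_ge1 u_lt_t; have /andP[_ mu_lt] := simple_mu_between.
have lam_t_le : lam t <= lam u.+1 by apply: (lam_le crit); lia.
split; last by apply: lt_le_trans mu_lt (le_trans lam_t_le _); apply: (lam_le crit); lia.
by apply: lt_le_trans mu_lt (le_trans lam_t_le _); apply: (le_lam_mu crit); lia.
Qed.

Lemma simple_mu_gt u : (t < u)%N -> (u <= n)%N -> lam u < mu t /\ ((u < n)%N -> mu u < mu t).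
Proof.
move=> t_lt_u u_le_n; have /andP[lt_mu _] := simple_mu_between.
have lam_u_le : lam u <= lam t.+1 by apply: (lam_le crit); lia.
split=> [|u_lt_n]; first exact: le_lt_trans lam_u_le lt_mu.
by apply: le_lt_trans lt_mu; apply: le_trans lam_u_le; apply: (le_mu_lam crit); lia.
Qed.

Lemma simple_mu_inj u : (1 <= u)%N -> (u < n)%N -> mu u = mu t -> u = t.
Proof.
move=> u_ge1 u_lt_n mu_eq; have [u_lt|t_lt|//] := ltngtP u t.
  by have [] := simple_mu_lt u_ge1 u_lt; rewrite mu_eq ltxx.
by have [_ /(_ u_lt_n)] := simple_mu_gt t_lt (ltnW u_lt_n); rewrite mu_eq ltxx.
Qed.

(* The sum is [q'/q] at [mu t]. *)
Lemma sum_inv_simple_mu : \sum_(1 <= i < n.+1) (mu t - lam i)^-1 = 0.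
Proof.
have q_mu : q.[mu t] != 0 by rewrite -rootE simple_mu_not_root.
have [_ _ _ deriv_q] := crit.
have := horner_deriv_prodX q_mu; rewrite deriv_q hornerZ.
have /rootP-> : root (prodX 1 n mu) (mu t) by apply: root_prodX_at; lia.
by rewrite mulr0 => /esym/eqP; rewrite mulf_eq0 (negPf q_mu) => /eqP.
Qed.

End Simple.

End SimpleCriticalPoints.

(* A run of [m] equal consecutive values is a root of multiplicity [m - 1] of the
   derivative, and contains [m - 1] adjacent equal pairs. *)
Lemma dvdp_eqpair_deriv (R : realFieldType) (f : nat -> R) a k :
  \prod_(a <= u < a + k | f u == f u.+1) ('X - (f u)%:P) %| (prodX a (a + k).+1 f)^`().
Proof.
have size_f : size (prodX a (a + k).+1 f) = (k.+2)%N by rewrite size_prodX; congr _.+1; lia.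
apply: dvdp_prod_XsubC_mu => [|x]; first by rewrite -size_poly_eq0 size_deriv size_f.
have -> : cnt a (a + k) (fun u => (f u == f u.+1) && (f u == x)) = cnt a (a + k) (eqpair f x).
  by apply: eq_cnt => u _; rewrite /eqpair; case: (f u =P x) => [->|_]; rewrite ?andbT ?andbF // eq_sym.
have [fx|nfx] := boolP (root (prodX a (a + k).+1 f) x).
  rewrite mu_deriv // mu_prodX subn1.
  have : (0 < cnt a (a + k).+1 (fun i => f i == x))%N.
    move: fx; rewrite root_prodX => /mapP[i]; rewrite mem_index_iota => ri ->.
    exact: (cnt_gt0 ri).
  by move=> /cnt_eqpair_lt; case: (cnt a (a + k).+1 _).
rewrite cnt_pred0 // => u ru; apply: contra nfx => /andP[/eqP<- _].
by apply: root_prodX_at; lia.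
Qed.

Section Window.
Variables (R : rcfType) (n : nat) (lam mu : nat -> R) (l r : nat).
Hypotheses (crit : critical_points n lam mu)
  (l_ge1 : (1 <= l)%N) (l_le_r : (l <= r)%N) (r_lt_n : (r < n)%N).

Local Notation c := (lam r.+1).
Local Notation Q := (prodX l r.+1 lam).
Local Notation K := (prodX l r.+1 mu).
Local Notation E := ((n - r)%:R *: Q + ('X - c%:P) * Q^`()).
Local Notation D := (E - (n - l).+1%:R *: K).

Section SimpleInWindow.
Variable t : nat.
Hypotheses (l_le_t : (l <= t)%N) (t_le_r : (t <= r)%N) (lam_neq : lam t != lam t.+1).

Let t_ge1 : (1 <= t)%N. Proof. lia. Qed.
Let t_lt_n : (t < n)%N. Proof. lia. Qed.

(* Split [sum_inv_simple_mu] at [l] and [r]: the roots left of the window give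
   negative terms, those right of it at most [1 / (mu t - c)] each. *)
Lemma window_weight_ge0 :
  0 <= (n - r)%:R + (mu t - c) * \sum_(l <= i < r.+1) (mu t - lam i)^-1.
Proof.
have /andP[lt_mu mu_lt] := simple_mu_between crit t_ge1 t_lt_n lam_neq.
have c_lt : c < mu t by apply: le_lt_trans lt_mu; apply: (lam_le crit); lia.
have := sum_inv_simple_mu crit t_ge1 t_lt_n lam_neq.
have [l_le_r1 l_le_n1 r_le_n1] : [/\ l <= r.+1, l <= n.+1 & r.+1 <= n.+1]%N by split; lia.
rewrite (@big_cat_nat _ _ _ l 1 n.+1) // (@big_cat_nat _ _ _ r.+1 l n.+1) //=.
set S1 := \sum_(1 <= i < l) _; set S2 := \sum_(l <= i < r.+1) _.
set S3 := \sum_(r.+1 <= i < n.+1) _ => sum0.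
have S1_le0 : S1 <= 0.
  rewrite /S1 big_nat; apply: sumr_le0 => i /andP[i_ge1 i_lt_l].
  by rewrite invr_le0 subr_le0 ltW // (lt_le_trans mu_lt) // (lam_le crit); lia.
have S3_le : (mu t - c) * S3 <= (n - r)%:R.
  rewrite /S3 mulr_sumr.
  have -> : (n - r)%:R = \sum_(r.+1 <= i < n.+1) (1 : R) by rewrite sumr_const_nat subSS.
  apply: ler_sum_nat => j /andP[r_lt_j j_le_n].
  have lam_j : lam j <= c by apply: (lam_le crit); lia.
  rewrite ler_pdivrMr ?subr_gt0 ?(le_lt_trans lam_j) // mul1r; lra.
have : (mu t - c) * S1 <= 0 by rewrite mulr_ge0_le0 // subr_ge0 ltW.
have -> : S2 = - S1 - S3 by lra.
nra.
Qed.

Lemma window_sign :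
  Q.[mu t] / \prod_(l <= u < r.+1 | u != t) (mu t - mu u) < 0.
Proof.
have /andP[lt_mu mu_lt] := simple_mu_between crit t_ge1 t_lt_n lam_neq.
rewrite horner_prodX (bigD1_seq t) ?mem_index_iota ?iota_uniq //=; last by lia.
rewrite -mulrA -prodf_div pmulr_llt0 ?subr_lt0 // big_seq_cond.
apply: prodr_gt0 => u /andP[]; rewrite mem_index_iota => /andP[l_le_u u_le_r] u_neq.
have [u_lt|t_lt|u_eq] := ltngtP u t; last by rewrite u_eq eqxx in u_neq.
  have u_ge1 : (1 <= u)%N by lia.
  have [mu_lt_u mu_lt_lam] := simple_mu_lt crit t_ge1 t_lt_n lam_neq u_ge1 u_lt.
  by rewrite -divrNN divr_gt0 // oppr_gt0 subr_lt0.
have [u_le_n u_lt_n] : (u <= n)%N /\ (u < n)%N by split; lia.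
have [lam_lt /(_ u_lt_n) mu_u_lt] := simple_mu_gt crit t_ge1 t_lt_n lam_neq t_lt u_le_n.
by rewrite divr_gt0 // subr_gt0.
Qed.

Lemma window_not_root : ~~ root Q (mu t).
Proof.
apply: contra (simple_mu_not_root crit t_ge1 t_lt_n lam_neq).
rewrite !root_prodX => /mapP[i]; rewrite mem_index_iota => ri ->.
by rewrite map_f // mem_index_iota; lia.
Qed.

Lemma window_term_le0 :
  E.[mu t] / \prod_(l <= u < r.+1 | u != t) (mu t - mu u) <= 0.
Proof.
have Q_neq0 : Q.[mu t] != 0 by rewrite -rootE window_not_root.
rewrite hornerD hornerZ hornerM hornerXsubC horner_deriv_prodX //.
rewrite (_ : _ + _ = Q.[mu t] * ((n - r)%:R +
    (mu t - c) * \sum_(l <= i < r.+1) (mu t - lam i)^-1)); last by ring.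
rewrite mulrAC; apply: mulr_le0_ge0; first exact/ltW/window_sign.
exact: window_weight_ge0.
Qed.

End SimpleInWindow.
Let size_window : (r.+1 - l = (r - l).+1)%N. Proof. lia. Qed.

Lemma coef_window_D_top : D`_(r - l).+1 = 0.
Proof.
rewrite coefB coefD !coefZ mulrBl coefB coefXM coefCM !coef_deriv -size_window.
rewrite !coef_prodX_size nth_default ?size_prodX //= mul0rn mulr0 subr0 !mulr1.
by rewrite size_window (_ : (n - l).+1 = n - r + (r - l).+1)%N ?natrD ?subrr //; lia.
Qed.

Lemma size_window_D : (size D <= (r - l).+1)%N.
Proof.
have sE : (size E <= (r.+1 - l).+1)%N.
  apply: leq_trans (size_polyD _ _) _; rewrite geq_max (leq_trans (size_scale_leq _ _)) ?size_prodX //=.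
  by apply: leq_trans (size_polyMleq _ _) _; rewrite size_XsubC size_deriv size_prodX.
have sD : (size D <= (r.+1 - l).+1)%N.
  apply: leq_trans (size_polyD _ _) _; rewrite size_polyN geq_max sE.
  by rewrite (leq_trans (size_scale_leq _ _)) ?size_prodX.
apply/leq_sizeP => j; rewrite leq_eqVlt => /orP[/eqP<-|lt_j]; first exact: coef_window_D_top.
by apply: nth_default; apply: leq_trans sD _; rewrite size_window.
Qed.

Lemma coef_window_D : D`_(r - l) = (n - l).+1%:R * \sum_(l <= j < r.+1) mu j
  - (n - l)%:R * \sum_(l <= j < r.+1) lam j - (r - l).+1%:R * c.
Proof.
have l_lt_r1 : (l < r.+1)%N by lia.
have := coef_prodX_pred lam l_lt_r1; have := coef_prodX_pred mu l_lt_r1.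
have := coef_prodX_size l r.+1 lam; rewrite size_window /= => cQ1 cK cQ.
have XQ' : ('X * Q^`())`_(r - l) = Q`_(r - l) *+ (r - l)%N.
  by rewrite coefXM; case: (r - l)%N => //= k; rewrite coef_deriv.
rewrite coefB coefD !coefZ mulrBl coefB XQ' coefCM coef_deriv cQ1 cQ cK.
rewrite (_ : n - l = n - r + (r - l))%N; last by lia.
by rewrite natrD -[_ *+ (r - l)%N]mulr_natr; ring.
Qed.

Local Notation Z := (\prod_(l <= u < r.+1 | lam u == lam u.+1) ('X - (lam u)%:P)).

Lemma dvdp_window_D : Z %| D.
Proof.
have ZQ : Z %| Q by rewrite /prodX [X in _ %| X](bigID (fun u => lam u == lam u.+1)) dvdp_mulIl.
have ZK : Z %| K.
  rewrite /prodX [X in _ %| X](bigID (fun u => lam u == lam u.+1)) /=; apply: dvdp_mulr.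
  rewrite big_nat_cond [X in _ %| X]big_nat_cond.
  rewrite [X in _ %| X](eq_bigr (fun u => 'X - (lam u)%:P)) // => u.
  case/andP=> /andP[l_le_u u_lt_r1] /eqP lam_eq.
  have [u_ge1 u_lt_n] : (1 <= u)%N /\ (u < n)%N by split; lia.
  by rewrite (pair_mu_eq crit u_ge1 u_lt_n lam_eq).
have ZQ' : Z %| (Q * ('X - c%:P))^`().
  have l_le_r1 : (l <= r.+1)%N by lia.
  have Q1 : prodX l r.+2 lam = Q * ('X - c%:P) by rewrite /prodX big_nat_recr.
  by have := dvdp_eqpair_deriv lam l (r.+1 - l); rewrite subnKC // Q1.
have -> : E = (n - r).-1%:R *: Q + (Q * ('X - c%:P))^`().
  have -> : (n - r)%:R = (n - r).-1%:R + 1 :> R by rewrite natr1 prednK // subn_gt0.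
  by rewrite scalerDl scale1r derivM derivXsubC mulr1; ring.
by rewrite -!mul_polyC dvdp_sub ?dvdp_add ?dvdp_mull.
Qed.

Local Notation simples := [seq u <- index_iota l r.+1 | lam u != lam u.+1].

Lemma horner_Z_mul_simples t : t \in simples ->
  Z.[mu t] * \prod_(u <- simples | u != t) (mu t - mu u) =
  \prod_(l <= u < r.+1 | u != t) (mu t - mu u).
Proof.
rewrite mem_filter mem_index_iota => /andP[lam_neq rt].
rewrite horner_prod_XsubC big_filter_cond [RHS](bigID (fun u => lam u == lam u.+1)) /=.
congr (_ * _); last by apply: eq_bigl => u; rewrite andbC.
rewrite big_nat_cond [RHS]big_nat_cond; apply: eq_big => [u|u].
  by have [->|ne] := eqVneq u t; rewrite ?(negPf lam_neq) ?andbF.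
case/andP=> /andP[l_le_u u_lt_r1] /eqP lam_eq.
have [u_ge1 u_lt_n] : (1 <= u)%N /\ (u < n)%N by split; lia.
by rewrite (pair_mu_eq crit u_ge1 u_lt_n lam_eq).
Qed.

(* Divide out the repeated roots and read the remaining coefficient off the
   Lagrange interpolation at the simple critical points. *)
Lemma coef_window_D_le0 : D`_(r - l) <= 0.
Proof.
have [D1 eD] : exists D1, D = D1 * Z by exists (D %/ Z); rewrite divpK // dvdp_window_D.
have [D1_eq0|D1_neq0] := eqVneq D1 0; first by rewrite eD D1_eq0 mul0r coef0.
have Z_monic : Z \is monic := monic_prod_XsubC _ _ _.
have size_Z : size Z = (count (fun u => lam u == lam u.+1) (index_iota l r.+1)).+1.
  exact: size_prod_XsubC_cond.
have count_simples : (count (fun u => lam u == lam u.+1) (index_iota l r.+1) + size simples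
    = (r - l).+1)%N by rewrite size_filter count_predC size_iota; lia.
have size_D1 : (size D1 <= size simples)%N.
  by have := size_window_D; rewrite eD size_Mmonic // size_Z; lia.
have [k size_s] : exists k, size simples = k.+1.
  by exists (size simples).-1; rewrite prednK // (leq_trans _ size_D1) // size_poly_gt0.
have -> : D`_(r - l) = D1`_(size simples).-1.
  have size_D1k : (size D1 <= k.+1)%N by rewrite -size_s.
  by rewrite eD size_s /= -(coef_Mmonic Z_monic size_D1k) size_Z; congr _`__; lia.
have uniq_s : uniq simples by rewrite filter_uniq // iota_uniq.
have mu_inj : {in simples &, injective mu}.
  move=> t u; rewrite !mem_filter !mem_index_iota => /andP[lam_t rt] /andP[_ ru] mu_eq.
  have [t_ge1 t_lt_n u_ge1 u_lt_n] : [/\ 1 <= t, t < n, 1 <= u & u < n]%N by split; lia.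
  exact/esym/(simple_mu_inj crit t_ge1 t_lt_n lam_t u_ge1 u_lt_n)/esym.
rewrite (coef_lagrange uniq_s mu_inj size_D1) big_seq; apply: sumr_le0 => t ts.
have [lam_t l_le_t t_le_r] : [/\ lam t != lam t.+1, l <= t & t <= r]%N.
  by move: ts; rewrite mem_filter mem_index_iota => /andP[? ?]; split=> //; lia.
have Z_split := horner_Z_mul_simples ts.
have prod_neq0 : \prod_(l <= u < r.+1 | u != t) (mu t - mu u) != 0.
  have := window_sign l_le_t t_le_r lam_t.
  by apply: contraTneq => ->; rewrite invr0 mulr0 ltxx.
have Z_neq0 : Z.[mu t] != 0 by apply: contraNneq prod_neq0; rewrite -Z_split => ->; rewrite mul0r.
have -> : D1.[mu t] = E.[mu t] / Z.[mu t].
  have K_mu : K.[mu t] = 0 by apply/rootP/root_prodX_at; lia.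
  by apply: (mulIf Z_neq0); rewrite mulfVK // -hornerM -eD hornerD hornerN hornerZ K_mu mulr0 subr0.
by rewrite -mulrA -invfM Z_split; apply: window_term_le0.
Qed.

Lemma window_sum_mu_le : \sum_(l <= j < r.+1) mu j <= \sum_(l <= j < r.+1) lam j
  - (n - l).+1%:R^-1 * \sum_(l <= j < r.+1) (lam j - c).
Proof.
have D_le0 := coef_window_D_le0; rewrite coef_window_D in D_le0.
have N_gt0 : 0 < (n - l).+1%:R :> R by rewrite ltr0n.
rewrite sumrB sumr_const_nat size_window -[c *+ _]mulr_natr.
rewrite -(ler_pM2l N_gt0) mulrBr mulrA mulfV ?gt_eqF // mul1r.
move: D_le0; rewrite -natr1; lra.
Qed.

End Window.

Lemma sum_nat_rev (V : zmodType) (F : nat -> V) N a b : (a <= b)%N -> (b <= N)%N ->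
  \sum_(N - b <= j < N - a) F (N - j)%N = \sum_(a.+1 <= j < b.+1) F j.
Proof.
elim: b => [|b IH] a_le_b b_le_N; first by rewrite (_ : a = 0%N) ?big_geq //; lia.
have [->|a_neq] := eqVneq a b.+1; first by rewrite !big_geq.
have [a_le b_le] : (a <= b)%N /\ (b <= N)%N by split; lia.
rewrite big_nat_recr //= -(IH a_le b_le) addrC.
have e : (N - b = (N - b.+1).+1)%N by lia.
rewrite [in LHS]big_ltn -?e; last by lia.
by rewrite (_ : N - (N - b.+1) = b.+1)%N //; lia.
Qed.

Lemma window_sum_mu_ge (R : rcfType) n (lam mu : nat -> R) l r :
  critical_points n lam mu -> (1 <= l)%N -> (l <= r)%N -> (r < n)%N ->
  \sum_(l <= j < r.+1) lam j.+1 + r.+1%:R^-1 * \sum_(l <= j < r.+1) (lam l - lam j.+1)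
    <= \sum_(l <= j < r.+1) mu j.
Proof.
move=> crit l_ge1 l_le_r r_lt_n.
have [r_ge l_le r_le] : [/\ 1 <= n - r, n - r <= n - l & n - l < n]%N by split; lia.
have := window_sum_mu_le (critical_points_rev_opp crit) r_ge l_le r_le.
have sum_mu (F : nat -> R) :
    \sum_(n - r <= j < (n - l).+1) F (n - j)%N = \sum_(l <= j < r.+1) F j.
  have -> : (n - l).+1 = (n - l.-1)%N by lia.
  by rewrite sum_nat_rev ?prednK //; lia.
have sum_lam (F : nat -> R) :
    \sum_(n - r <= j < (n - l).+1) F (n.+1 - j)%N = \sum_(l <= j < r.+1) F j.+1.
  have [-> ->] : (n - l).+1 = (n.+1 - l)%N /\ (n - r = n.+1 - r.+1)%N by split; lia.
  by rewrite sum_nat_rev ?big_add1 //; lia.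
rewrite /rev_opp.
have [-> ->] : (n - (n - r) = r)%N /\ (n.+1 - (n - l).+1 = l)%N by split; lia.
rewrite (sum_mu (fun k => - mu k)) (sum_lam (fun k => - lam k)).
rewrite (sum_lam (fun k => - lam k - - lam l)) !sumrN.
have -> : \sum_(l <= j < r.+1) (- lam j.+1 - - lam l) = \sum_(l <= j < r.+1) (lam l - lam j.+1).
  by apply: eq_bigr => j _; rewrite opprK addrC.
by move=> h; rewrite -lerN2 opprD; exact: h.
Qed.

Unset Implicit Arguments.

Theorem proposition2p4 (R : realType) (n : nat) (lam mu : nat -> R) :
  (2 <= n)%N ->
  (forall i : nat, (1 <= i)%N -> (i < n)%N -> lam i.+1 <= lam i) ->
  (forall i : nat, (1 <= i)%N -> (i < n.-1)%N -> mu i.+1 <= mu i) ->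
  (rootpoly lam n)^`() = n%:R *: rootpoly mu n.-1 ->
  forall l r : nat, (1 <= l)%N -> (l <= r)%N -> (r <= n.-1)%N ->
    \sum_(l <= j < r.+1) lam j.+1
      + (r.+1)%:R^-1 * \sum_(l <= j < r.+1) (lam l - lam j.+1)
    <= \sum_(l <= j < r.+1) mu j
  /\ \sum_(l <= j < r.+1) mu j
    <= \sum_(l <= j < r.+1) lam j
      - ((n - l).+1)%:R^-1 * \sum_(l <= j < r.+1) (lam j - lam r.+1).
Proof.
move=> n_ge2 lam_noninc mu_noninc deriv_q l r l_ge1 l_le_r r_le_n.
have crit : critical_points n lam mu.
  split=> //; have -> : prodX 1 n mu = rootpoly mu n.-1 by rewrite /rootpoly prednK // ltnW.
  exact: deriv_q.
have r_lt_n : (r < n)%N by lia.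
split; first exact: (window_sum_mu_ge crit l_ge1 l_le_r r_lt_n).
exact: (window_sum_mu_le crit l_ge1 l_le_r r_lt_n).
Qed.
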